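(* Suppose $T$ has the f.s. dichotomy, and let $\bar a,\bar b$ be finite tuples, $c$ a singleton, and $M\preceq\mathbb{C}$ a small model. (1) If $\mathrm{tp}(\bar a/Mc)$ and $\mathrm{tp}(c/M\bar b)$ are both not finitely satisfied in $M$, then $\mathrm{tp}(\bar a/M\bar b)$ is not finitely satisfied in $M$. (2) $\mathrm{tp}(\bar a/M\bar b)$ is finitely satisfied in $M$ iff $\mathrm{tp}(a/M\bar b)$ is finitely satisfied in $M$ for every element $a$ of $\bar a$. (3) If $C\supseteq M$ is full, then $\mathrm{tp}(\bar a/C\bar b)$ is finitely satisfied in $M$ iff $\mathrm{tp}(a/Cb)$ is finitely satisfied in $M$ for every element $a$ of $\bar a$ and every element $b$ of $\bar b$.
   Context: Work in a monster model $\mathbb{C}$ of $T$. For $B\supseteq M$, $\mathrm{tp}(A/B)$ is finitely satisfied in $M$ if each of its formulas is satisfied by a tuple from $M$. $T$ has the f.s. dichotomy if for every small model $M$ and finite tuples $\bar a,\bar b$ with $\mathrm{tp}(\bar b/M\bar a)$ finitely satisfied in $M$, for every singleton $c$ either $\mathrm{tp}(\bar b/M\bar ac)$ or $\mathrm{tp}(\bar bc/M\bar a)$ is finitely satisfied in $M$. A set $C\supseteq M$ is full if every type in $S_n(M)$, for every $n$, is realized in $C$. *)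

From Stdlib Require List.
From mathcomp Require Import all_boot.
Set Implicit Arguments. Unset Strict Implicit. Unset Printing Implicit Defensive.

Record signature := Signature {
  fsym : Type; fari : fsym -> nat;
  rsym : Type; rari : rsym -> nat }.

Section Syntax.
Variable L : signature.

Inductive term : Type :=
| Var : nat -> term
| App : forall f : fsym L, ('I_(fari f) -> term) -> term.

(* variables are named by natural numbers; FEx i binds variable i *)
Inductive formula : Type :=
| FFalse : formula
| FEq : term -> term -> formula
| FRel : forall r : rsym L, ('I_(rari r) -> term) -> formula
| FNeg : formula -> formula
| FAnd : formula -> formula -> formula
| FEx : nat -> formula -> formula.

Fixpoint tvars (t : term) : seq nat :=
  match t with
  | Var i => [:: i]
  | App f args => flatten [seq tvars (args i) | i <- enum 'I_(fari f)]
  end.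

Fixpoint fv (phi : formula) : seq nat :=
  match phi with
  | FFalse => [::]
  | FEq t1 t2 => tvars t1 ++ tvars t2
  | FRel r args => flatten [seq tvars (args i) | i <- enum 'I_(rari r)]
  | FNeg phi => fv phi
  | FAnd phi psi => fv phi ++ fv psi
  | FEx i phi => [seq j <- fv phi | j != i]
  end.
End Syntax.

Record structure (L : signature) := Structure {
  dom :> Type;
  fint : forall f : fsym L, ('I_(fari f) -> dom) -> dom;
  rint : forall r : rsym L, ('I_(rari r) -> dom) -> Prop }.

Section Semantics.
Variables (L : signature) (S : structure L).

Fixpoint teval (v : nat -> S) (t : term L) : S :=
  match t with
  | Var i => v i
  | App f args => fint (fun i => teval v (args i))
  end.

Fixpoint sat (v : nat -> S) (phi : formula L) : Prop :=
  match phi with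
  | FFalse => False
  | FEq t1 t2 => teval v t1 = teval v t2
  | FRel r args => rint (fun i => teval v (args i))
  | FNeg phi => ~ sat v phi
  | FAnd phi psi => sat v phi /\ sat v psi
  | FEx i phi => exists x : S, sat (fun j => if j == i then x else v j) phi
  end.
End Semantics.
Arguments sat {L} S v phi.
Arguments teval {L} S v t.

Section Sub.
Variables (L : signature) (C : structure L).

Definition closed_sub (M : C -> Prop) :=
  forall f (args : 'I_(fari f) -> C), (forall i, M (args i)) -> M (fint args).

Definition substr (M : C -> Prop) (HM : closed_sub M) : structure L :=
  @Structure L (sig M)
    (fun f args => exist M (fint (fun i => proj1_sig (args i)))
                          (HM f _ (fun i => proj2_sig (args i))))
    (fun r args => rint (fun i => proj1_sig (args i))).

Definition elementary_sub (M : C -> Prop) :=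
  exists HM : closed_sub M, (exists x, M x) /\
    forall (phi : formula L) (v : nat -> sig M),
      sat (substr HM) v phi <-> sat C (fun j => proj1_sig (v j)) phi.

(* ---------- Cardinalities: K is a type of cardinality kappa ---------- *)
Definition card_lt (A B : Type) :=
  (exists f : A -> B, injective f) /\ ~ (exists g : B -> A, injective g).

Definition small (K : Type) (A : C -> Prop) := card_lt (sig A) K.

Definition small_model (K : Type) (M : C -> Prop) := small K M /\ elementary_sub M.

(* tuples are sequences; the valuation [tval d e] assigns d_j to variable j
   for j < size d and e j to every other variable (parameters). *)
Definition tval (d : seq C) (e : nat -> C) : nat -> C := fun j => nth (e j) d j.

Definition saturated (K : Type) :=
  forall A : C -> Prop, small K A ->
  forall p : formula L -> (nat -> C) -> Prop,
    (forall phi e, p phi e -> forall j, j \in fv phi -> j != 0 -> A (e j)) ->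
    (forall ps : seq (formula L * (nat -> C)),
        (forall q, List.In q ps -> p q.1 q.2) ->
        exists x : C, forall q, List.In q ps -> sat C (tval [:: x] q.2) q.1) ->
    exists x : C, forall phi e, p phi e -> sat C (tval [:: x] e) phi.

Definition automorphism (s : C -> C) :=
  [/\ bijective s,
      (forall f (args : 'I_(fari f) -> C), s (fint args) = fint (fun i => s (args i)))
    & (forall r (args : 'I_(rari r) -> C), rint args <-> rint (fun i => s (args i)))].

Definition strongly_homogeneous (K : Type) :=
  forall A : C -> Prop, small K A ->
  forall f : C -> C,
    (forall phi (v : nat -> C), (forall j, j \in fv phi -> A (v j)) ->
        (sat C v phi <-> sat C (fun j => f (v j)) phi)) ->
    exists s : C -> C, automorphism s /\ forall x, A x -> s x = f x.

(* C is a monster model: kappa-saturated and strongly kappa-homogeneous,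
   with kappa (the cardinality of K) infinite and > |L| *)
Definition monster (K : Type) :=
  [/\ card_lt (fsym L + rsym L + nat) K, saturated K & strongly_homogeneous K].

Definition fs (a : seq C) (B M : C -> Prop) :=
  forall (phi : formula L) (e : nat -> C),
    (forall j, j \in fv phi -> size a <= j -> B (e j)) ->
    sat C (tval a e) phi ->
    exists m : seq C, [/\ size m = size a, (forall x, List.In x m -> M x)
                        & sat C (tval m e) phi].

(* T has the f.s. dichotomy (T = Th(C), C the monster) *)
Definition fs_dichotomy (K : Type) :=
  forall M : C -> Prop, small_model K M ->
  forall a b : seq C,
    fs b (fun x => M x \/ List.In x a) M ->
    forall c : C,
      fs b (fun x => (M x \/ List.In x a) \/ x = c) M \/
      fs (rcons b c) (fun x => M x \/ List.In x a) M.

(* p in S_n(M): a set of formulas phi(x_0..x_{n-1}, e) with parameters from M,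
   complete and consistent (with the elementary diagram, i.e. finitely
   realised in C) *)
Definition complete_type (n : nat) (M : C -> Prop)
    (p : formula L -> (nat -> C) -> Prop) :=
  [/\ (forall phi e, p phi e -> forall j, j \in fv phi -> n <= j -> M (e j)),
      (forall phi e, (forall j, j \in fv phi -> n <= j -> M (e j)) ->
          p phi e \/ p (FNeg phi) e)
    & (forall ps : seq (formula L * (nat -> C)),
        (forall q, List.In q ps -> p q.1 q.2) ->
        exists d : seq C, size d = n /\
          forall q, List.In q ps -> sat C (tval d q.2) q.1)].

Definition realized_in (D : C -> Prop) (n : nat) (p : formula L -> (nat -> C) -> Prop) :=
  exists d : seq C, [/\ size d = n, (forall x, List.In x d -> D x)
                      & forall phi e, p phi e -> sat C (tval d e) phi].

Definition full (M D : C -> Prop) :=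
  forall n p, complete_type n M p -> realized_in D n p.
End Sub.

(* By finite character the dichotomy extends
      to every parameter set B containing M ([fs_dichotomy_sets]); this gives
      part (1) ([fs_split_point]) and, with transitivity, part (2)
      ([fs_of_coordinates]).  Part (3) reduces to adding one parameter at a
      time over a full set ([fs_amalgamate]), where fullness and invariance
      move a failure witness into the full set. *)

From Pilot Require Import Defs.
From Stdlib Require List.
From Stdlib Require Import Classical ClassicalEpsilon FunctionalExtensionality.
From mathcomp Require Import all_boot zify.
From Stdlib Require Import Lia.
Set Implicit Arguments. Unset Strict Implicit. Unset Printing Implicit Defensive.

Section Syntax.
Variables (L : signature) (C : structure L).

Lemma teval_coincidence (v w : nat -> C) t :
  (forall j, j \in tvars t -> v j = w j) -> teval C v t = teval C w t.
Proof.
elim: t => [i|f args IH] H /=; first by apply: H; rewrite inE.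
congr fint; apply: functional_extensionality => i; apply: IH => j Hj.
apply: H => /=; apply/flatten_mapP; exists i => //; exact: mem_enum.
Qed.

Lemma sat_coincidence (phi : formula L) : forall v w : nat -> C,
  (forall j, j \in fv phi -> v j = w j) -> (sat C v phi <-> sat C w phi).
Proof.
elim: phi => [|t1 t2|r args|phi IH|phi IH1 psi IH2|i phi IH] v w H /=.
- by [].
- have Hv t : (forall j, j \in tvars t -> j \in fv (FEq t1 t2)) ->
      teval C v t = teval C w t.
    by move=> Ht; apply: teval_coincidence => j /Ht; apply: H.
  by rewrite (Hv t1) ?(Hv t2) // => j Hj; rewrite /= mem_cat Hj ?orbT.
- have -> : (fun i => teval C v (args i)) = (fun i => teval C w (args i)) => //.
  apply: functional_extensionality => i; apply: teval_coincidence => j Hj.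
  apply: H => /=; apply/flatten_mapP; exists i => //; exact: mem_enum.
- by rewrite (IH v w H).
- rewrite (IH1 v w) ?(IH2 v w) // => j Hj; apply: H; by rewrite /= mem_cat Hj ?orbT.
- have Hx x : sat C (fun j => if j == i then x else v j) phi <->
              sat C (fun j => if j == i then x else w j) phi.
    apply: IH => j Hj; case: eqP => // /eqP ne; apply: H.
    by rewrite /= mem_filter ne.
  by split=> [[x /Hx]|[x /Hx]]; exists x.
Qed.

Fixpoint bind_chain (ps : seq (nat * nat)) (phi : formula L) : formula L :=
  match ps with
  | [::] => phi
  | (k, s) :: ps' => FEx k (FAnd (FEq (Var L k) (Var L s)) (bind_chain ps' phi))
  end.

Fixpoint chain_update (ps : seq (nat * nat)) (E : nat -> C) : nat -> C :=
  match ps with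
  | [::] => E
  | (k, s) :: ps' => chain_update ps' (fun j => if j == k then E s else E j)
  end.

Lemma bind_chain_sat ps phi : forall E, (forall p, p \in ps -> p.1 != p.2) ->
  (sat C E (bind_chain ps phi) <-> sat C (chain_update ps E) phi).
Proof.
elim: ps => [|[k s] ps IH] E H //=.
have ks : s != k by rewrite eq_sym; apply: (H (k, s)); rewrite inE eqxx.
have H' p : p \in ps -> p.1 != p.2 by move=> Hp; apply: H; rewrite inE Hp orbT.
rewrite eqxx (negbTE ks); split => [[x [-> Hx]]|Hs]; first exact/IH.
by exists (E s); split => //; apply/IH.
Qed.

Lemma chain_update_out ps : forall E k, k \notin map fst ps ->
  chain_update ps E k = E k.
Proof.
elim: ps => [|[k s] ps IH] E j //=; rewrite inE negb_or => /andP [ne Hj].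
by rewrite IH // (negbTE ne).
Qed.

Lemma chain_update_map (tau rho : nat -> nat) l : forall E,
  (forall j j', j \in l -> j' \in l -> rho j != tau j') ->
  (forall j j', j \in l -> j' \in l -> tau j = tau j' -> j = j') ->
  forall j, j \in l -> chain_update [seq (tau i, rho i) | i <- l] E (tau j) = E (rho j).
Proof.
elim: l => [|j0 l IH] E H1 H2 j //=.
have H1' j1 j2 : j1 \in l -> j2 \in l -> rho j1 != tau j2.
  by move=> Hj1 Hj2; apply: H1; rewrite inE ?Hj1 ?Hj2 orbT.
have H2' j1 j2 : j1 \in l -> j2 \in l -> tau j1 = tau j2 -> j1 = j2.
  by move=> Hj1 Hj2; apply: H2; rewrite inE ?Hj1 ?Hj2 orbT.
case Hjl: (j \in l) => Hj.
- rewrite IH // (negbTE (H1 _ _ _ _)) // inE ?Hjl ?eqxx ?orbT //.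
- move: Hj; rewrite inE Hjl orbF => /eqP ej0; subst j.
  rewrite chain_update_out ?eqxx //.
  apply/negP => /mapP [[a b] /mapP [i Hi [-> ->]] /= ei].
  have ej : j0 = i by apply: H2 => //; rewrite inE ?eqxx ?Hi ?orbT.
  by move: Hjl; rewrite ej Hi.
Qed.

(* Move the values
   x_(sigma j) to fresh variables, then copy them onto the variables j. *)
Lemma rename_formula (sigma : nat -> nat) (phi : formula L) :
  exists psi, forall E, sat C E psi <-> sat C (fun j => E (sigma j)) phi.
Proof.
set l := fv phi.
set Z := (\max_(j <- l ++ map sigma l) j).+1.
have HZ j : j \in l ++ map sigma l -> j < Z by move=> Hj; rewrite ltnS leq_bigmax_seq.
have Hl j : j \in l -> j < Z by move=> Hj; rewrite HZ // mem_cat Hj.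
have Hs j : j \in l -> sigma j < Z by move=> Hj; rewrite HZ // mem_cat map_f ?orbT.
pose copy := [seq (i, Z + i) | i <- l].
pose fresh := [seq (Z + i, sigma i) | i <- l].
exists (bind_chain fresh (bind_chain copy phi)) => E.
rewrite bind_chain_sat; last first.
  by move=> p /mapP [i Hi ->] /=; have := Hs i Hi; rewrite neq_ltn; lia.
rewrite bind_chain_sat; last first.
  by move=> p /mapP [i Hi ->] /=; rewrite neq_ltn; lia.
apply: sat_coincidence => j Hj.
rewrite (chain_update_map (tau := id) (rho := fun i => Z + i)) //; last first.
  by move=> j1 j2 _ Hj2; have := Hl j2 Hj2; rewrite neq_ltn; lia.
rewrite (chain_update_map (tau := fun i => Z + i) (rho := sigma)) //.
- by move=> j1 j2 Hj1 _; have := Hs j1 Hj1; rewrite neq_ltn; lia.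
- by move=> j1 j2 _ _; lia.
Qed.
End Syntax.

Section Lists.
Variable T : Type.

Lemma In_rcons (s : seq T) y z : List.In z (rcons s y) <-> List.In z s \/ z = y.
Proof.
rewrite -cats1 List.in_app_iff /=.
by split=> [[|[<-|[]]]|[|->]]; auto.
Qed.

Lemma In_nth_index (d : T) s z :
  List.In z s -> exists k, k < size s /\ nth d s k = z.
Proof.
elim: s => [|x s IH] //= [<-|/IH [k [Hk <-]]]; first by exists 0.
by exists k.+1.
Qed.

Lemma In_singleton (x y : T) : List.In y [:: x] -> y = x.
Proof. by case=> [<-|[]]. Qed.

Lemma In_nth (d : T) s k : k < size s -> List.In (nth d s k) s.
Proof. by elim: s k => [|x s IH] [|k] //= Hk; [left | right; apply: IH]. Qed.

Lemma nth_In_or_default (d : T) s k : nth d s k = d \/ List.In (nth d s k) s.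
Proof.
elim: s k => [|x s IH] [|k] /=; try by [left | right; left].
by case: (IH k) => H; [left | right; right].
Qed.
End Lists.

Section FiniteSatisfiability.
Variables (L : signature) (C : structure L) (M : C -> Prop) (m0 : C).
Hypothesis Mm0 : M m0.

(* [tval] of Defs, not the tuple projection of the same name. *)
Local Notation tv := (@Defs.tval L C).

Definition holds_in_M (n : nat) (e : nat -> C) (phi : formula L) :=
  exists m : seq C, [/\ size m = n, (forall x, List.In x m -> M x) & sat C (tv m e) phi].

Lemma tv_def (s : seq C) e k : tv s e k = if k < size s then nth m0 s k else e k.
Proof.
rewrite /Defs.tval; case: ifP => H; first exact: set_nth_default.
by apply: nth_default; rewrite leqNgt H.
Qed.

Lemma nth_in_M (m : seq C) k : (forall x, List.In x m -> M x) -> M (nth m0 m k).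
Proof. by move=> Hm; case: (nth_In_or_default m0 m k) => [->|/Hm]. Qed.

Ltac case_ifs := repeat match goal with
  |- context [if ?b then _ else _] => case: (boolP b) => ? end.
Ltac index_arith := solve [ done | lia | (f_equal; lia) ].

Lemma tv_cat (a m s : seq C) g :
  size m = size a -> tv m (tv (a ++ s) g) = tv (m ++ s) g.
Proof.
move=> Hm; apply: functional_extensionality => j.
by case_ifs; rewrite !tv_def !size_cat !nth_cat; case_ifs; index_arith.
Qed.

Lemma fs_intro a B : (forall x, M x -> B x) ->
  (forall phi e, (forall j, size a <= j -> B (e j)) -> sat C (tv a e) phi ->
     holds_in_M (size a) e phi) ->
  fs a B M.
Proof.
move=> MB H phi e He Hs.
pose e' j := if j \in fv phi then e j else m0.
have E' s : sat C (tv s e') phi <-> sat C (tv s e) phi.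
  by apply: sat_coincidence => j Hj; rewrite /Defs.tval /e' Hj.
have [|m [Hm1 Hm2 /E' Hm3]] := H phi e' _ (proj2 (E' a) Hs); last by exists m.
by move=> j Hj; rewrite /e'; case: ifP => Hj'; [exact: He | exact: MB].
Qed.

Lemma fs_mono a B B' : (forall x, B' x -> B x) -> fs a B M -> fs a B' M.
Proof. by move=> H Hfs phi e He; apply: Hfs => j Hj Hj'; apply/H/He. Qed.

Lemma fs_nil B : fs [::] B M.
Proof. by move=> phi e _ Hs; exists [::]. Qed.

Lemma collect_params (P Q : C -> Prop) (l : seq nat) (n : nat) (e : nat -> C) :
  (forall j, j \in l -> n <= j -> P (e j) \/ Q (e j)) ->
  exists w, (forall z, List.In z w -> P z) /\
    forall j, j \in l -> n <= j -> List.In (e j) w \/ Q (e j).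
Proof.
elim: l => [|j l IH] H; first by exists [::].
have [|w [Hw1 Hw2]] := IH; first by move=> k Hk; apply: H; rewrite inE Hk orbT.
case: (classic (n <= j /\ P (e j))) => [[Hj HP]|Hj].
- exists (e j :: w); split=> [z [<-|/Hw1]|k] //.
  rewrite inE => /orP [/eqP -> _|Hk /(Hw2 k Hk) [|]]; by [left; left | left; right | right].
- exists w; split=> // k; rewrite inE => /orP [/eqP -> Hnk|Hk /(Hw2 k Hk)] //.
  by case: (H j (mem_head _ _) Hnk) => [HP|]; [case: Hj | right].
Qed.

Lemma fs_params a B :
  (forall w, (forall z, List.In z w -> B z) -> fs a (fun z => M z \/ List.In z w) M) ->
  fs a B M.
Proof.
move=> H phi e He Hs.
have [|w [Hw1 Hw2]] := @collect_params B (fun=> False) (fv phi) (size a) e.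
  by move=> j Hj Hnj; left; apply: He.
by apply: (H w Hw1) Hs => j Hj Hnj; right; case: (Hw2 j Hj Hnj).
Qed.

Lemma not_fs_witness a B : ~ fs a B M ->
  exists phi e, [/\ forall j, j \in fv phi -> size a <= j -> B (e j),
                    sat C (tv a e) phi & ~ holds_in_M (size a) e phi].
Proof.
move=> H; apply: NNPP => Hn; apply: H => phi e He Hs.
by apply: NNPP => Hno; apply: Hn; exists phi, e.
Qed.

Lemma fs_instance a B s g psi : fs a B M ->
  (forall z, List.In z s -> B z) -> (forall k, size a + size s <= k -> B (g k)) ->
  sat C (tv (a ++ s) g) psi ->
  exists m, [/\ size m = size a, forall x, List.In x m -> M x
              & sat C (tv (m ++ s) g) psi].
Proof.
move=> Hfs Hs Hg Ha.
have [j _ Hj||m [Hm1 Hm2 Hm3]] := Hfs psi (tv (a ++ s) g); last first.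
- by exists m; rewrite -(tv_cat _ _ Hm1).
- by rewrite tv_cat.
rewrite tv_def size_cat nth_cat; case_ifs; try lia.
- by apply/Hs/In_nth; lia.
- by apply: Hg; lia.
Qed.

Lemma fs_coordinate a B x : (forall z, M z -> B z) ->
  List.In x a -> fs a B M -> fs [:: x] B M.
Proof.
move=> MB /(In_nth_index m0) [i [Hi <-]] Hfs; apply: fs_intro => // phi e He Hs.
pose sigma k := if k == 0 then i else size a + k.
pose e' j := if size a < j then e (j - size a) else m0.
have shift s : size s = size a -> (fun k => tv s e' (sigma k)) = tv [:: nth m0 s i] e.
  move=> Hsz; apply: functional_extensionality; case=> [|k].
  - by rewrite /sigma /= !tv_def Hsz Hi.
  - by rewrite /sigma !tv_def /= Hsz /e'; case_ifs; index_arith.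
have [psi Hpsi] := rename_formula C sigma phi.
have [j _ Hj||m [Hm1 Hm2 /Hpsi]] := Hfs psi e'.
- by rewrite /e'; case: ifP => Hlt; [apply: He => /=; lia | exact: MB].
- by apply/Hpsi; rewrite shift.
rewrite shift // => Hm; exists [:: nth m0 m i]; split => // z [<-|[]].
exact: nth_in_M.
Qed.

(* Transitivity: if tp(a/Bx) and tp(x/B) are f.s. in M, so is tp(ax/B).
   Realize a in M first, then x, after moving x to the front. *)
Lemma fs_rcons a x B : (forall z, M z -> B z) ->
  fs a (fun z => B z \/ z = x) M -> fs [:: x] B M -> fs (rcons a x) B M.
Proof.
move=> MB Hax Hx; apply: fs_intro => // phi e He; rewrite -cats1 => Hs.
have [m [Hm1 Hm2 Hm3]] := fs_instance Hax (fun z Hz => or_intror (In_singleton Hz))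
  (fun k Hk => or_introl (He k ltac:(by rewrite size_rcons -addn1))) Hs.
set n := size a.
pose sigma k := if k < n then k.+1 else if k == n then 0 else k.
pose e' j := if j <= n then nth m0 m j.-1 else e j.
have front z : (fun k => tv [:: z] e' (sigma k)) = tv (m ++ [:: z]) e.
  apply: functional_extensionality => k; rewrite /sigma /e'.
  case_ifs; rewrite !tv_def /= size_cat Hm1 /= ?nth_cat ?Hm1; case_ifs; try index_arith.
  by have -> : k - size a = 0 by lia.
have [psi Hpsi] := rename_formula C sigma phi.
have [j _ Hj||m' [Hm'1 Hm'2 Hm'3]] := Hx psi e'.
- rewrite /e'; case: ifP => Hjn; first exact/MB/nth_in_M.
  by apply: He; rewrite size_rcons; lia.
- by apply/Hpsi; rewrite front.
case: m' Hm'1 Hm'2 Hm'3 => [|z [|]] // _ Hz /Hpsi; rewrite front cats1 => Hmz.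
exists (rcons m z); split => //.
- by rewrite size_rcons size_cat Hm1 addn1.
- by move=> y /In_rcons [/Hm2|->] //; apply: Hz; left.
Qed.

Lemma list_parameters n (s : seq C) phi e :
  (forall j, j \in fv phi -> n <= j -> List.In (e j) s) ->
  exists psi, forall a g, size a = n ->
    (sat C (tv (a ++ s) g) psi <-> sat C (tv a e) phi).
Proof.
move=> Hs.
pose index j := epsilon (inhabits 0) (fun k => k < size s /\ nth m0 s k = e j).
have indexP j : j \in fv phi -> n <= j -> index j < size s /\ nth m0 s (index j) = e j.
  by move=> Hj Hnj; exact: epsilon_spec (In_nth_index m0 (Hs j Hj Hnj)).
have [psi Hpsi] := rename_formula C (fun j => if j < n then j else n + index j) phi.
exists psi => a g Ha; rewrite Hpsi; apply: sat_coincidence => j Hj.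
case: ifP => Hjn; rewrite !tv_def size_cat nth_cat Ha ?Hjn.
- by rewrite ifT //; lia.
- move/negbT: Hjn; rewrite -leqNgt => Hjn.
  have [Hi <-] := indexP j Hj Hjn.
  by rewrite ifT ?ifF ?addKn //; lia.
Qed.

Definition same_type (t t' : seq C) := forall phi e, (forall j, size t <= j -> M (e j)) ->
  (sat C (tv t e) phi <-> sat C (tv t' e) phi).

Lemma same_type_sym t t' : size t' = size t -> same_type t t' -> same_type t' t.
Proof. by move=> Hsz H phi e He; symmetry; apply: H; rewrite -Hsz. Qed.

(* Prefixing both tuples by the same tuple from M preserves equality of types:
   the prefix can be absorbed in the parameters. *)
Lemma same_type_prefix m t t' : (forall x, List.In x m -> M x) ->
  size t' = size t -> same_type t t' -> same_type (m ++ t) (m ++ t').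
Proof.
move=> Hm Hsz H phi e He; set n := size m; set N := size t.
pose sigma k := if k < n then N + k else if k < n + N then k - n else k.
pose e' j := if j < N + n then nth m0 m (j - N) else e j.
have absorb s : size s = N -> (fun k => tv s e' (sigma k)) = tv (m ++ s) e.
  move=> Hs; apply: functional_extensionality => k; rewrite /sigma /e'.
  by case_ifs; rewrite !tv_def !size_cat !nth_cat Hs; case_ifs; index_arith.
have [psi Hpsi] := rename_formula C sigma phi.
rewrite -(absorb t) // -(absorb t') // -!Hpsi; apply: H => j Hj.
rewrite /e'; case: ifP => Hjn; first exact: nth_in_M.
by apply: He; rewrite size_cat; lia.
Qed.

(* Otherwise psi(x,t) /\ ~psi(x,t')
   would be realized in u, hence by some m from M, against tp(mt) = tp(mt'). *)
Lemma fs_type_invariance u t t' B psi g : (forall z, M z -> B z) -> fs u B M ->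
  (forall z, List.In z t -> B z) -> (forall z, List.In z t' -> B z) ->
  size t' = size t -> same_type t t' -> (forall k, M (g k)) ->
  sat C (tv (u ++ t) g) psi -> sat C (tv (u ++ t') g) psi.
Proof.
move=> MB Hfs Ht Ht' Hsz Heq Hg Hs; apply: NNPP => Hn.
pose g' j := g (j - size t).
pose sigma0 k := if k < size u + size t then k else k + size t.
pose sigma1 k := if k < size u then k else k + size t.
have read0 s : size s = size u -> (fun k => tv (s ++ t ++ t') g' (sigma0 k)) = tv (s ++ t) g.
  move=> Hs'; apply: functional_extensionality => k; rewrite /sigma0 /g'.
  by case_ifs; rewrite !tv_def !size_cat !nth_cat; case_ifs; index_arith.
have read1 s : size s = size u -> (fun k => tv (s ++ t ++ t') g' (sigma1 k)) = tv (s ++ t') g.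
  move=> Hs'; apply: functional_extensionality => k; rewrite /sigma1 /g'.
  by case_ifs; rewrite !tv_def !size_cat !nth_cat; case_ifs; index_arith.
have [psi0 Hpsi0] := rename_formula C sigma0 psi.
have [psi1 Hpsi1] := rename_formula C sigma1 psi.
have Hchi : sat C (tv (u ++ t ++ t') g') (FAnd psi0 (FNeg psi1)).
  by split; [apply/Hpsi0; rewrite read0 | apply/Hpsi1; rewrite read1].
have Htt' z : List.In z (t ++ t') -> B z by move/List.in_app_iff => [/Ht|/Ht'].
have [m [Hm1 Hm2 []]] := fs_instance Hfs Htt' (fun k _ => MB _ (Hg (k - size t))) Hchi.
rewrite /sat -/(sat C) Hpsi0 Hpsi1 read0 // read1 // => Hmt; apply.
by apply/(same_type_prefix Hm2 Hsz Heq).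
Qed.

(* The same invariance when the f.s. element y comes after an element m of M:
   exchange m and y, then absorb m into the tuples. *)
Lemma fs_type_invariance_second m y t t' B psi g : (forall z, M z -> B z) ->
  fs [:: y] B M -> M m -> (forall z, List.In z t -> B z) ->
  (forall z, List.In z t' -> B z) -> size t' = size t -> same_type t t' ->
  (forall k, M (g k)) ->
  sat C (tv [:: m, y & t] g) psi -> sat C (tv [:: m, y & t'] g) psi.
Proof.
move=> MB Hy Mm Ht Ht' Hsz Heq Hg.
pose swap k := if k == 0 then 1 else if k == 1 then 0 else k.
have [psi' Hpsi'] := rename_formula C swap psi.
have Hswap r : sat C (tv [:: y, m & r] g) psi' <-> sat C (tv [:: m, y & r] g) psi.
  rewrite Hpsi'; suff -> : (fun k => tv [:: y, m & r] g (swap k)) = tv [:: m, y & r] g by [].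
  by apply: functional_extensionality; case=> [|[|k]].
have Mm1 z : List.In z [:: m] -> M z by case=> [<-|[]].
have mB r : (forall z, List.In z r -> B z) -> forall z, List.In z (m :: r) -> B z.
  by move=> Hr z [<-|/Hr] //; apply: MB.
have Hmt : same_type (m :: t) (m :: t') := same_type_prefix Mm1 Hsz Heq.
move=> Hmyt; apply/Hswap.
apply: (fs_type_invariance MB Hy (mB t Ht) (mB t' Ht') _ Hmt Hg); first by rewrite /= Hsz.
exact/Hswap.
Qed.

Lemma full_same_type D : full M D -> forall t : seq C,
  exists t', [/\ size t' = size t, (forall z, List.In z t' -> D z) & same_type t t'].
Proof.
move=> Hfull t.
pose p phi e := (forall j, j \in fv phi -> size t <= j -> M (e j)) /\ sat C (tv t e) phi.
have [|t' [Ht'1 Ht'2 Ht'3]] := Hfull (size t) p.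
  split=> [phi e [] //|phi e He|ps Hps]; last by exists t; split => // q /Hps [].
  by case: (classic (sat C (tv t e) phi)) => Hs; [left | right].
exists t'; split => // phi e He; split => Hs.
- by apply: Ht'3; split => // j _; apply: He.
- apply: NNPP => Hn; have Hneg : p (FNeg phi) e by split => // j _; apply: He.
  exact: Ht'3 _ _ Hneg Hs.
Qed.

Section Dichotomy.
Hypothesis dichotomy : forall a b : seq C, fs b (fun x => M x \/ List.In x a) M ->
  forall c, fs b (fun x => (M x \/ List.In x a) \/ x = c) M \/
            fs (rcons b c) (fun x => M x \/ List.In x a) M.

(* The dichotomy for an arbitrary parameter set B containing M: if tp(b/Bc)
   is not f.s., a witness uses finitely many parameters R from B besides c,
   and the dichotomy over M R w settles every finite w from B. *)
Lemma fs_dichotomy_sets b B : (forall z, M z -> B z) -> fs b B M ->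
  forall c, fs b (fun z => B z \/ z = c) M \/ fs (rcons b c) B M.
Proof.
move=> MB Hb c; case: (classic (fs b (fun z => B z \/ z = c) M)) => [|Hno]; [by left | right].
have [phi [e [He Hs Hnot]]] := not_fs_witness Hno.
have [R [RB HR]] := @collect_params B (eq^~ c) (fv phi) (size b) e He.
apply: fs_params => w Hw.
have HRw : fs b (fun z => M z \/ List.In z (R ++ w)) M.
  by apply: fs_mono Hb => z [/MB|/List.in_app_iff [/RB|/Hw]].
case: (dichotomy HRw c) => Hc.
- case: Hnot; apply: Hc Hs => j Hj Hnj.
  by case: (HR j Hj Hnj) => [HRe|->]; [left; right; apply/List.in_app_iff; left | right].
- by apply: fs_mono Hc => z [Mz|Hz]; [left | right; apply/List.in_app_iff; right].
Qed.

Lemma fs_split_point a B c : (forall z, M z -> B z) -> fs a B M ->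
  fs a (fun z => M z \/ z = c) M \/ fs [:: c] B M.
Proof.
move=> MB Ha; case: (fs_dichotomy_sets MB Ha c) => Hc.
- by left; apply: fs_mono Hc => z [/MB|->]; [left | right].
- by right; apply: fs_coordinate MB _ Hc; apply/In_rcons; right.
Qed.

Lemma fs_of_coordinates a B : (forall z, M z -> B z) ->
  (forall x, List.In x a -> fs [:: x] B M) -> fs a B M.
Proof.
move=> MB; elim/last_ind: a => [|a x IH] Ha; first exact: fs_nil.
have Hx : fs [:: x] B M by apply: Ha; apply/In_rcons; right.
have {IH}Ha : fs a B M by apply: IH => z Hz; apply: Ha; apply/In_rcons; left.
by case: (fs_dichotomy_sets MB Ha x) => // Hax; apply: fs_rcons.
Qed.

(* A failure is witnessed by
   phi(x, y, R) with R from B.  Then tp(xy/B) is f.s. by the dichotomy, so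
   phi(x, y, R') holds for a copy R' of R in D; tp(x/Dy) gives m in M with
   phi(m, y, R'), and invariance over tp(y/B) brings this back to
   phi(m, y, R), contradicting the choice of phi. *)
Lemma fs_amalgamate D B x y : (forall z, M z -> D z) -> (forall z, D z -> B z) ->
  full M D -> fs [:: x] B M -> fs [:: x] (fun z => D z \/ z = y) M ->
  fs [:: x] (fun z => B z \/ z = y) M.
Proof.
move=> MD DB Hfull HxB HxDy; apply: NNPP => Hno.
have MB z : M z -> B z by move/MD/DB.
have Hxy : fs [:: x; y] B M by case: (fs_dichotomy_sets MB HxB y).
have Hy : fs [:: y] B M by apply: fs_coordinate MB _ Hxy; right; left.
have [phi [e [He Hs Hnot]]] := not_fs_witness Hno.
have [R [RB HR]] := @collect_params B (eq^~ y) (fv phi) 1 e He.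
have [|psi Hpsi] := @list_parameters 1 (y :: R) phi e.
  by move=> j Hj Hnj; case: (HR j Hj Hnj) => [|->]; [right | left].
have [R' [HR'sz HR'D HRR']] := full_same_type Hfull R.
have R'B z : List.In z R' -> B z by move/HR'D/DB.
pose g (_ : nat) := m0.
have Hxy_R' : sat C (tv ([:: x; y] ++ R') g) psi.
  by apply: (fs_type_invariance MB Hxy RB R'B) => //; apply/(Hpsi [:: x]).
have [||m' [Hm'sz Hm' Hmy]] := fs_instance (s := y :: R') HxDy _ _ Hxy_R'.
- by move=> z [<-|/HR'D]; [right | left].
- by move=> k _; left; apply: MD.
case: m' Hm'sz Hm' Hmy => [|m [|]] // _ Hm Hmy.
have Mm : M m by apply: Hm; left.
have HR'R : same_type R' R by apply: same_type_sym.
apply: Hnot; exists [:: m]; split => //; apply/(Hpsi [:: m] g) => //.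
exact: (fs_type_invariance_second MB Hy Mm R'B RB (esym HR'sz) HR'R _ Hmy).
Qed.

Lemma fs_add_tuple D x b : (forall z, M z -> D z) -> full M D -> fs [:: x] D M ->
  (forall y, List.In y b -> fs [:: x] (fun z => D z \/ z = y) M) ->
  fs [:: x] (fun z => D z \/ List.In z b) M.
Proof.
move=> MD Hfull HxD; elim/last_ind: b => [|b y IH] Hb.
  by apply: fs_mono HxD => z [].
have Hxb : fs [:: x] (fun z => D z \/ List.In z b) M.
  by apply: IH => z Hz; apply: Hb; apply/In_rcons; left.
have Hxy : fs [:: x] (fun z => D z \/ z = y) M by apply: Hb; apply/In_rcons; right.
apply: fs_mono (fs_amalgamate MD (fun z Dz => or_introl Dz) Hfull Hxb Hxy).
by move=> z [Dz|/In_rcons [Hz|->]]; [left; left | left; right | right].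
Qed.
End Dichotomy.
End FiniteSatisfiability.

Theorem lemma3 (L : signature) (C : structure L) (K : Type) :
  monster C K -> fs_dichotomy C K ->
  forall M : C -> Prop, small_model K M ->
  forall (a b : seq C) (c : C), 0 < size a -> 0 < size b ->
  [/\ (~ fs a (fun x => M x \/ x = c) M ->
       ~ fs [:: c] (fun x => M x \/ List.In x b) M ->
       ~ fs a (fun x => M x \/ List.In x b) M),
      (fs a (fun x => M x \/ List.In x b) M <->
       forall x, List.In x a -> fs [:: x] (fun z => M z \/ List.In z b) M)
    & forall D : C -> Prop, (forall x, M x -> D x) -> full M D ->
       (fs a (fun x => D x \/ List.In x b) M <->
        forall x y, List.In x a -> List.In y b ->
          fs [:: x] (fun z => D z \/ z = y) M)].
Proof.
move=> _ Hdich M HM a b c _ Hb.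
have dichotomy := Hdich M HM.
have [m0 Mm0] : exists m0, M m0 by case: HM => _ [? [[m Mm] _]]; exists m.
have MMb z : M z -> M z \/ List.In z b by left.
split.
- move=> Hac Hcb Hab.
  by case: (fs_split_point Mm0 dichotomy c MMb Hab) => [/Hac|/Hcb].
- split=> [Hab x Hx|]; first exact: (fs_coordinate Mm0 MMb Hx Hab).
  exact: (fs_of_coordinates Mm0 dichotomy MMb).
- move=> D MD Hfull; have MDb z : M z -> D z \/ List.In z b by left; apply: MD.
  split=> [Hab x y Hx Hy|Hxy].
  + by apply: (fs_mono _ (fs_coordinate Mm0 MDb Hx Hab)) => z [Dz|->]; [left | right].
  + apply: (fs_of_coordinates Mm0 dichotomy MDb) => x Hx.
    have [y0 Hy0] : exists y0, List.In y0 b.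
      by move: Hb; case: (b) => [|y0 b'] // _; exists y0; left.
    apply: (fs_add_tuple Mm0 dichotomy MD Hfull _ _) => [|y Hy]; last exact: Hxy.
    by apply: (fs_mono _ (Hxy x y0 Hx Hy0)) => z Dz; left.
Qed.
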